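(* For every $n\ge1$ and every integer $k\ge0$, the set of SR states $c$ on $K_n^0$ with $\sum_{i=1}^n c_i-\binom{n}{2}=k$ equals the set of integer lattice points of the convex hull (in $\mathbb{R}^n$) of the set of DR states $c$ on $K_n^0$ with $\sum_{i=1}^n c_i-\binom{n}{2}=k$.
   Context: $K_n^0$ is the complete graph on vertex set $\{0,1,\dots,n\}$ with sink $0$; every vertex has degree $n$. A configuration is $c\in\mathbb{Z}_{\ge0}^n$, stable if $c_i\le n-1$ for all $i$. ASM: an unstable vertex topples by sending one grain to each neighbour (grains to the sink disappear). SSM (parameter $p\in(0,1)$): an unstable vertex $i$, independently for each incident edge, sends one grain along it with probability $p$, otherwise keeps it. Each model gives a Markov chain on stable configurations: add a grain at vertex $i$ with probability $\mu_i>0$, then stabilise. DR = recurrent for the ASM chain, SR = recurrent for the SSM chain. The quantity $\sum_i c_i-\binom n2$ is the level of $c$. *)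

From HB Require Import structures.
From mathcomp Require Import all_boot all_order all_algebra.
From mathcomp Require Import reals.
Set Implicit Arguments. Unset Strict Implicit. Unset Printing Implicit Defensive.
Import Order.TTheory GRing.Theory Num.Theory.

(* K_n^0 : vertices {0,1,...,n}, sink 0.  Non-sink vertex j+1 is represented
   by j : 'I_n.  Every vertex has degree n: non-sink vertex j is adjacent to
   the sink and to the n-1 other non-sink vertices. *)

Definition config (n : nat) := 'I_n -> nat.

Definition stable (n : nat) (c : config n) : Prop := forall i, c i <= n.-1.
Definition unstable_at (n : nat) (c : config n) (i : 'I_n) : Prop := n <= c i.

Definition add_grain (n : nat) (c : config n) (i : 'I_n) : config n :=
  fun j => if j == i then (c j).+1 else c j.

(* ASM toppling of an (unstable) vertex i: one grain to every neighbour,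
   the grain sent to the sink disappears. *)
Definition asm_topple (n : nat) (c : config n) (i : 'I_n) : config n :=
  fun j => if j == i then c j - n else (c j).+1.

(* SSM toppling of an (unstable) vertex i in which the set of edges that
   actually carry a grain is: the edge to the sink iff [b], and the edges to
   the non-sink vertices in [T] (with i \notin T).  Every such choice has
   positive probability p^{|S|}(1-p)^{n-|S|} for p in (0,1). *)
Definition ssm_topple (n : nat) (c : config n) (i : 'I_n) (b : bool)
  (T : {set 'I_n}) : config n :=
  fun j => if j == i then c j - (b + #|T|) else (c j + (j \in T))%N.

Definition asm_step (n : nat) (c d : config n) : Prop :=
  exists i, unstable_at c i /\ d = asm_topple c i.

Definition ssm_step (n : nat) (c d : config n) : Prop :=
  exists i b (T : {set 'I_n}),
    unstable_at c i /\ i \notin T /\ d = ssm_topple c i b T.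

Inductive rtc (A : Type) (r : A -> A -> Prop) : A -> A -> Prop :=
| rtc_refl x : rtc r x x
| rtc_step x y z : r x y -> rtc r y z -> rtc r x z.

Definition asm_stabilises_to (n : nat) (c d : config n) : Prop :=
  rtc (@asm_step n) c d /\ stable d.
Definition ssm_stabilises_to (n : nat) (c d : config n) : Prop :=
  rtc (@ssm_step n) c d /\ stable d.

(* Transitions with positive probability of the Markov chains on stable
   configurations (add a grain at i, which has probability mu_i > 0, then
   stabilise). *)
Definition asm_trans (n : nat) (c d : config n) : Prop :=
  stable c /\ exists i, asm_stabilises_to (add_grain c i) d.
Definition ssm_trans (n : nat) (c d : config n) : Prop :=
  stable c /\ exists i, ssm_stabilises_to (add_grain c i) d.

Definition recurrent (n : nat) (tr : config n -> config n -> Prop)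
  (c : config n) : Prop :=
  stable c /\ forall d, rtc tr c d -> rtc tr d c.

Definition DR (n : nat) (c : config n) : Prop := recurrent (@asm_trans n) c.
Definition SR (n : nat) (c : config n) : Prop := recurrent (@ssm_trans n) c.

Definition has_level (n : nat) (c : config n) (k : nat) : Prop :=
  (\sum_(i < n) c i)%N = ('C(n, 2) + k)%N.

Definition in_conv_hull (R : realType) (n : nat) (S : config n -> Prop)
  (x : 'I_n -> R) : Prop :=
  exists (m : nat) (p : 'I_m -> config n) (w : 'I_m -> R),
    [/\ forall j, S (p j),
        forall j, 0 <= w j,
        \sum_(j < m) w j = 1
      & forall i, x i = \sum_(j < m) w j * ((p j i)%:R)]%R.

(* SR states are the stable configurations [c] with
   [\sum_(i in A) c i >= 'C(#|A|, 2)] for every set [A] of vertices: SSM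
   topplings preserve these bounds, which hold at the maximal configuration,
   and conversely any such [c] is reached from the maximal configuration by
   undoing one toppling at a time.  DR states are the stable configurations
   passing Dhar's burning test, hence are SR; as the bounds are linear, the
   integral points of the convex hull of the DR states of level [k] are SR of
   level [k].  Conversely, an SR state with two equal coordinates strictly
   between [0] and [n - 1] is the midpoint of the two SR states obtained by
   moving a grain between them, which have a larger sum of squares, and an SR
   state without such a pair passes the burning test. *)

From HB Require Import structures.
From mathcomp Require Import all_boot all_order all_algebra.
From mathcomp Require Import reals.
From mathcomp Require Import zify lra.
From Stdlib Require Import FunctionalExtensionality.
Import Order.TTheory GRing.Theory Num.Theory.
Set Implicit Arguments. Unset Strict Implicit. Unset Printing Implicit Defensive.

(* Sums and cardinalities produced by rewriting may differ from those written
   in statements by the form of their implicit finType ([reverse_coercion],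
   [Finite.sort]), which hides their equality from [lia]. *)
Ltac set_lia := unfold reverse_coercion in *; simpl Finite.sort in *; lia.

Section ReflexiveTransitiveClosure.
Variables (A : Type) (r : A -> A -> Prop).

Lemma rtc1 x y : r x y -> rtc r x y.
Proof. by move=> rxy; apply: rtc_step rxy (rtc_refl _ _). Qed.

Lemma rtc_trans x y z : rtc r x y -> rtc r y z -> rtc r x z.
Proof. by elim=> // x' y' z' rxy _ IH /IH; apply: rtc_step. Qed.

Lemma rtc_invariant (P : A -> Prop) x y :
  (forall x y, r x y -> P x -> P y) -> P x -> rtc r x y -> P y.
Proof. by move=> rP Px rxy; elim: rxy Px => // x' y' z' /rP; auto. Qed.

Lemma rtc_sub (s : A -> A -> Prop) :
  (forall x y, r x y -> s x y) -> forall x y, rtc r x y -> rtc s x y.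
Proof.
move=> rs x y; elim=> [|x' y' z' /rs]; first exact: rtc_refl.
by move=> sxy _; apply: rtc_step sxy.
Qed.

End ReflexiveTransitiveClosure.

Lemma potential_ind T (Q P : T -> Prop) (f : T -> nat) (B : nat) :
  (forall x, Q x -> f x <= B) ->
  (forall x, Q x -> (forall y, Q y -> f x < f y -> P y) -> P x) ->
  forall x, Q x -> P x.
Proof.
move=> fB IH x; have [m] := ubnP (B - f x).
elim: m x => [|m IHm] x // lt_m Qx; apply: (IH x Qx) => y Qy lt_xy.
by apply: (IHm y _ Qy); have := fB y Qy; lia.
Qed.

Lemma sum_mem_card n (A T : {set 'I_n}) :
  \sum_(j in A) (j \in T : nat) = #|A :&: T|.
Proof.
rewrite -sum1_card [LHS]big_mkcond [RHS]big_mkcond /=.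
by apply: eq_bigr => j _; rewrite inE; case: (j \in A); case: (j \in T).
Qed.

Lemma sum_indicator n (T : {set 'I_n}) : \sum_j (j \in T : nat) = #|T|.
Proof. by rewrite -sum1_card [RHS]big_mkcond; apply: eq_bigr => j _; case: (j \in T). Qed.

Lemma sum_delta n (u : 'I_n) (F : 'I_n -> nat) :
  \sum_j (j == u) * F j = F u.
Proof. by rewrite (bigD1 u) //= eqxx mul1n big1 ?addn0 // => j /negbTE ->. Qed.

Lemma sum_pred1 n (P : pred 'I_n) (u : 'I_n) : \sum_(j | P j) (j == u : nat) = P u.
Proof.
rewrite big_mkcond (bigD1 u) //= eqxx big1 ?addn0 => [|j /negbTE ->]; first by case: (P u).
by case: (P j).
Qed.

Lemma bin2S a : 'C(a.+1, 2) = 'C(a, 2) + a.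
Proof. by rewrite binS bin1. Qed.

Lemma bin2_double a : 'C(a, 2) * 2 = a * a.-1.
Proof. by elim: a => // a IH; rewrite bin2S mulnDl IH; case: a {IH} => //= a; lia. Qed.

Lemma bin2D a b : 'C(a + b, 2) = 'C(a, 2) + a * b + 'C(b, 2).
Proof.
elim: b => [|b IH]; first by rewrite !(addn0, muln0).
by rewrite addnS !bin2S IH mulnS; lia.
Qed.

(* In [subsums_untopple], [r], [s], [x] are the sizes of [A :&: T], [A :\: T],
   [N :\: A] and [X], [Y], [Z] the sums of [c] over them; [r Z <= x X] holds
   because [T] carries the largest values. *)
Lemma bin2_convexity r s x X Y Z :
  'C(s, 2) <= Y -> 'C((r + s + x).+1, 2) <= s + x + (X + Y + Z) -> r * Z <= x * X ->
  'C(r + s, 2) + r <= X + Y.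
Proof.
move=> le_Y le_XYZ le_Z.
have [r0|r_gt0] := posnP r; first by rewrite r0 add0n; lia.
rewrite -(@leq_pmul2l (r + x)) ?addn_gt0 ?r_gt0 //.
move: le_XYZ; rewrite bin2S !bin2D => le_XYZ.
have := leq_mul (leqnn r) le_XYZ; have := leq_mul (leqnn x) le_Y.
have := bin2_double r; case: r r_gt0 {le_XYZ} le_Z => // r _ le_Z /=.
move/(congr1 (muln x)); lia.
Qed.

Lemma exists_top_subset (I : finType) (f : I -> nat) (B : {set I}) m : m <= #|B| ->
  exists T : {set I}, [/\ T \subset B, #|T| = m & {in T & B :\: T, forall w v, f v <= f w}].
Proof.
elim: m => [|m IH] le_mB.
  by exists set0; rewrite sub0set cards0; split=> // w v; rewrite inE.
have [T [sub_TB card_T topT]] := IH (ltnW le_mB).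
have : 0 < #|B :\: T| by rewrite cardsD (setIidPr sub_TB) card_T subn_gt0.
case/card_gt0P => v0 v0_BT; have [w /setDP[wB wNT] max_w] := arg_maxnP f v0_BT.
exists (w |: T); split.
- by rewrite subUset sub1set wB.
- by rewrite cardsU1 wNT card_T.
move=> w1 v w1_wT /setDP[vB]; rewrite in_setU1 negb_or => /andP[vw vNT].
have vBT : v \in B :\: T by rewrite inE vNT.
by case/setU1P: w1_wT => [->|w1T]; [apply: max_w|apply: topT].
Qed.

(** * Recurrence through the maximal configuration *)

Definition max_config (n : nat) : config n := fun=> n.-1.
Arguments max_config : clear implicits.

Section SandpileBasics.
Variable n : nat.
Implicit Types (c d : config n) (i j : 'I_n).

Lemma asm_trans_stable c d : asm_trans c d -> stable d.
Proof. by case=> _ [i []]. Qed.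

Lemma ssm_trans_stable c d : ssm_trans c d -> stable d.
Proof. by case=> _ [i []]. Qed.

Lemma asm_toppleE c i : asm_topple c i = ssm_topple c i true [set~ i].
Proof.
apply: functional_extensionality => j.
rewrite /asm_topple /ssm_topple cardsC1 card_ord !inE.
by case: eqP => _ /=; [rewrite add1n prednK // (leq_ltn_trans _ (ltn_ord i))|rewrite addn1].
Qed.

Lemma asm_step_ssm c d : asm_step c d -> ssm_step c d.
Proof.
case=> i [unst_i ->]; exists i, true, [set~ i].
by rewrite !inE eqxx asm_toppleE.
Qed.

Lemma asm_trans_ssm c d : asm_trans c d -> ssm_trans c d.
Proof.
case=> stc [i [topple_c std]]; split=> //; exists i; split=> //.
exact: rtc_sub asm_step_ssm _ _ topple_c.
Qed.

Lemma asm_reach_max_config d : stable d -> rtc (@asm_trans n) d (max_config n).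
Proof.
have [m] := ubnP (\sum_j (n.-1 - d j)); elim: m d => [|m IH] d // lt_m std.
have [/forallP full_d|/forallPn [j /eqP dj]] := boolP [forall j, d j == n.-1].
  suff -> : d = max_config n by apply: rtc_refl.
  by apply: functional_extensionality => j; apply/eqP/full_d.
have std' : stable (add_grain d j).
  by move=> i; rewrite /add_grain; case: eqP => [->|_]; have := std j; have := std i; lia.
apply: rtc_step (IH _ _ std'); first by split=> //; exists j; split=> //; apply: rtc_refl.
rewrite (bigD1 j) //= /add_grain eqxx.
under eq_bigr => i ij do rewrite (negbTE ij).
by move: lt_m; rewrite (bigD1 j) //=; have := std j; lia.
Qed.

Lemma recurrent_max_configP (tr : config n -> config n -> Prop) c :
  (forall d e, tr d e -> stable e) -> (forall d, stable d -> rtc tr d (max_config n)) ->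
  recurrent tr c <-> stable c /\ rtc tr (max_config n) c.
Proof.
move=> tr_stable reach_max; split=> [[stc rec]|[stc max_c]].
  by split=> //; apply: rec; apply: reach_max.
split=> // d c_d; have std : stable d.
  by apply: rtc_invariant c_d => // x y /tr_stable.
exact: rtc_trans (reach_max _ std) max_c.
Qed.

Lemma DR_max_configP c : DR c <-> stable c /\ rtc (@asm_trans n) (max_config n) c.
Proof. exact: recurrent_max_configP asm_trans_stable asm_reach_max_config. Qed.

Lemma SR_max_configP c : SR c <-> stable c /\ rtc (@ssm_trans n) (max_config n) c.
Proof.
apply: recurrent_max_configP ssm_trans_stable _ => d /asm_reach_max_config.
exact: rtc_sub asm_trans_ssm _ _.
Qed.

Lemma DR_SR c : DR c -> SR c.
Proof. by case/DR_max_configP=> stc /(rtc_sub asm_trans_ssm) max_c; apply/SR_max_configP. Qed.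

End SandpileBasics.

(** * Subset sums characterise SSM recurrence *)

Section SubsetSums.
Variable n : nat.
Implicit Types (c d : config n) (i j : 'I_n) (A T : {set 'I_n}).

Definition subsums_ge_bin2 c := forall A, 'C(#|A|, 2) <= \sum_(i in A) c i.

Lemma subsums_ge_bin2_le c d :
  (forall j, c j <= d j) -> subsums_ge_bin2 c -> subsums_ge_bin2 d.
Proof. by move=> le_cd subc A; apply: leq_trans (subc A) _; apply: leq_sum. Qed.

Lemma subsums_add_grain c i : subsums_ge_bin2 c -> subsums_ge_bin2 (add_grain c i).
Proof. by apply: subsums_ge_bin2_le => j; rewrite /add_grain; case: eqP. Qed.

Lemma cardsD_add_le A T : #|T :\: A| + #|A| <= n.
Proof.
have : #|T :\: A| <= #|~: A| by apply/subset_leq_card/subsetP => j; rewrite !inE => /andP[].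
by have := cardsC A; rewrite card_ord; lia.
Qed.

Lemma subsums_ssm_topple c i b T : unstable_at c i -> i \notin T ->
  subsums_ge_bin2 c -> subsums_ge_bin2 (ssm_topple c i b T).
Proof.
rewrite /unstable_at => unst_i iNT subc A.
have [iA|iNA] := boolP (i \in A); last first.
  apply: leq_trans (subc A) _; apply: leq_sum => j jA; rewrite /ssm_topple.
  by case: eqP => [eq_ji|_]; [rewrite -eq_ji jA in iNA|apply: leq_addr].
rewrite (big_setD1 i iA) /= /ssm_topple eqxx.
under eq_bigr => j /setD1P[/negbTE -> _] do [].
rewrite big_split /= sum_mem_card.
have cardA : #|A| = #|A :\ i|.+1 by rewrite (cardsD1 i A) iA.
have le_AiT : #|(A :\ i) :&: T| <= #|A :\ i| by apply/subset_leq_card/subsetIl.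
have ATE : (A :\ i) :&: T = A :&: T.
  by apply/setP => j; rewrite !inE; case: eqP => [->|]; rewrite ?(negbTE iNT) ?andbF.
rewrite cardA bin2S ATE addnCA; apply: leq_add (subc _) _.
rewrite ATE in le_AiT; have := cardsD_add_le A T; have := cardsID A T.
by rewrite setIC cardA; case: b; set_lia.
Qed.

Lemma subsums_max_config : subsums_ge_bin2 (max_config n).
Proof.
move=> A; rewrite /max_config sum_nat_const.
have : #|A| <= n by have := max_card (mem A); rewrite card_ord.
by have := bin2_double #|A|; nia.
Qed.

Lemma subsums_ssm_trans c d :
  ssm_trans c d -> subsums_ge_bin2 c -> subsums_ge_bin2 d.
Proof.
case=> _ [i [topple_c _]] /(subsums_add_grain i) sub_ci.
apply: (rtc_invariant _ sub_ci topple_c) => x y [j [b [T [unst_j [jNT ->]]]]].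
exact: subsums_ssm_topple.
Qed.

Lemma subsums_pair c p q : subsums_ge_bin2 c -> p != q -> 0 < c p + c q.
Proof.
by move=> subc pq; have := subc [set p; q]; rewrite cards2 pq big_setU1 ?big_set1 ?inE.
Qed.

Lemma SR_subsums c : SR c -> subsums_ge_bin2 c.
Proof.
by case/SR_max_configP=> _; apply: rtc_invariant subsums_ssm_trans subsums_max_config.
Qed.
End SubsetSums.

Section BackwardSSM.
Variable n : nat.
Implicit Types (c d : config n) (u j w : 'I_n) (A T : {set 'I_n}).

(* The configuration from which adding a grain at [u] and toppling [u] onto
   the sink and [T] gives back [c]. *)
Definition untopple c u T : config n :=
  fun j => if j == u then n.-1 else if j \in T then (c j).-1 else c j.

Lemma untopple_stable c u T : stable c -> stable (untopple c u T).
Proof.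
move=> stc j; rewrite /untopple; case: (j == u) => //; case: (j \in T) => //.
exact: leq_trans (leq_pred _) (stc j).
Qed.

Lemma sum_untopple c u T : u \notin T -> {in T, forall w, 0 < c w} ->
  \sum_j untopple c u T j + #|T| + c u = \sum_j c j + n.-1.
Proof.
move=> uNT c_gt0; rewrite -sum_indicator -(sum_delta u (fun=> c u)).
rewrite -(sum_delta u (fun=> n.-1)) -!big_split /=; apply: eq_bigr => j _.
rewrite /untopple; case: (eqVneq j u) => [->|ju]; first by rewrite (negbTE uNT); lia.
by case: (boolP (j \in T)) => [/c_gt0|] /=; lia.
Qed.

Lemma untopple_ssm_trans c u T : stable c -> u \notin T -> c u + #|T| = n.-1 ->
  {in T, forall w, 0 < c w} -> ssm_trans (untopple c u T) c.
Proof.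
move=> stc uNT cuT c_gt0; have n_gt0 : 0 < n := leq_ltn_trans (leq0n _) (ltn_ord u).
split; first exact: untopple_stable.
exists u; split=> //; apply: rtc1; exists u, true, T; split; last split=> //.
  by rewrite /unstable_at /add_grain /untopple !eqxx prednK.
apply: functional_extensionality => j; rewrite /ssm_topple /add_grain /untopple.
case: (eqVneq j u) => [->|ju]; first by lia.
by case: (boolP (j \in T)) => [/c_gt0|] /=; lia.
Qed.

(* When a vertex [x] of [T] is full in [c], leaving it undecremented makes it
   unstable after the toppling of [u]; it then topples onto the sink only. *)
Lemma untopple_cascade_ssm_trans c u T x : stable c -> u \notin T ->
  c u + #|T| = n.-1 -> {in T, forall w, 0 < c w} -> x \in T -> c x = n.-1 ->
  ssm_trans (untopple c u (T :\ x)) c.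
Proof.
move=> stc uNT cuT c_gt0 xT cx; have n_gt0 : 0 < n := leq_ltn_trans (leq0n _) (ltn_ord u).
have xu : x != u by apply: contraNneq uNT => <-.
split; first exact: untopple_stable.
exists u; split=> //; apply: (@rtc_step _ _ _ (fun j => if j == x then n else c j)).
  exists u, true, T; split; last split=> //.
    by rewrite /unstable_at /add_grain /untopple !eqxx prednK.
  apply: functional_extensionality => j; rewrite /ssm_topple /add_grain /untopple !inE.
  case: (eqVneq j u) => [->|ju]; first by rewrite eq_sym (negbTE xu); lia.
  case: (eqVneq j x) => [->|jx] /=; first by rewrite xT cx addn1 prednK.
  by case: (boolP (j \in T)) => [/c_gt0|] /=; lia.
apply: rtc1; exists x, true, set0; rewrite /unstable_at eqxx inE; do 2!split=> //.
apply: functional_extensionality => j; rewrite /ssm_topple cards0 inE addn0.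
by case: (eqVneq j x) => [->|]; rewrite ?cx ?subn1 ?addn0.
Qed.

Lemma sum_le_untopple c u T (B : {set 'I_n}) : u \notin B ->
  \sum_(j in B) c j <= \sum_(j in B) untopple c u T j + #|B :&: T|.
Proof.
move=> uNB; rewrite -sum_mem_card -big_split /=; apply: leq_sum => j jB.
rewrite /untopple; case: eqP => [ju|_]; first by rewrite -ju jB in uNB.
by case: (j \in T) => /=; lia.
Qed.

Lemma subsums_untopple c u T : subsums_ge_bin2 c -> u \notin T ->
  c u + #|T| = n.-1 -> {in T & ~: (u |: T), forall w v, c v <= c w} ->
  subsums_ge_bin2 (untopple c u T).
Proof.
move=> subc uNT cuT topT A.
have [uA|uNA] := boolP (u \in A).
  rewrite (big_setD1 u uA) /= {1}/untopple eqxx -cuT.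
  have := sum_le_untopple c T (negbT (setD11 u A)).
  have : #|(A :\ u) :&: T| <= #|T| by apply/subset_leq_card/subsetIr.
  have := subc A; rewrite (big_setD1 u uA) /=.
  set_lia.
set N := ~: (u |: T).
set X := \sum_(j in A :&: T) c j; set Y := \sum_(j in A :\: T) c j.
set Z := \sum_(j in N :\: A) c j.
have sum_A : \sum_(j in A) c j = X + Y by rewrite (big_setID T).
have card_A : #|A| = #|A :&: T| + #|A :\: T| by rewrite cardsID.
have NA : N :&: A = A :\: T.
  apply/setP => j; rewrite !inE; case: (eqVneq j u) => [->|] //=.
  by rewrite (negbTE uNA) andbF.
have cu : c u = #|A :\: T| + #|N :\: A|.
  rewrite -NA cardsID; have := cardsC (u |: T).
  by rewrite -/N cardsU1 uNT card_ord; set_lia.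
have topZX : #|A :&: T| * Z <= #|N :\: A| * X.
  rewrite big_distrr /= -sum_nat_const; apply: leq_sum => v /setDP[vN _].
  rewrite -sum_nat_const; apply: leq_sum => w /setIP[_ wT]; exact: topT.
have sum_AN : \sum_(j in A :|: N) c j = X + Y + Z.
  by rewrite (big_setID A) /= setUK setDUl setDv set0U sum_A.
have card_AN : #|A :|: N| = #|A| + #|N :\: A|.
  by rewrite -(cardsID A (A :|: N)) setUK setDUl setDv set0U.
have uNAN : u \notin A :|: N by rewrite in_setU negb_or uNA /N in_setC setU11.
have subc_S := subc (u |: (A :|: N)).
rewrite (big_setU1 _ uNAN) cardsU1 uNAN sum_AN card_AN card_A cu add1n in subc_S.
have := bin2_convexity (subc (A :\: T)) subc_S topZX.
by have := sum_le_untopple c T uNA; rewrite card_A sum_A; set_lia.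
Qed.

(* A backward step either keeps the number of grains and creates a full vertex,
   or adds a grain. *)
Definition ssm_potential c : nat := 2 * \sum_j c j + [exists j, c j == n.-1].

Lemma ssm_potential_max c : stable c -> ssm_potential c <= 2 * (n * n.-1) + 1.
Proof.
move=> stc; rewrite /ssm_potential leq_add ?leq_b1 // leq_mul2l /=.
by rewrite -[n in n * _]card_ord -sum_nat_const; apply: leq_sum => j _; apply: stc.
Qed.

Lemma exists_untopple_set c j0 : subsums_ge_bin2 c -> c j0 < n.-1 ->
  exists u T, [/\ c u < n.-1, u \notin T, c u + #|T| = n.-1,
    {in T, forall w, 0 < c w} & {in T & ~: (u |: T), forall w v, c v <= c w}].
Proof.
move=> subc cj0; have [u _ min_u] := arg_minnP c (isT : predT j0).
have le_card : n.-1 - c u <= #|[set~ u]| by rewrite cardsC1 card_ord leq_subr.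
have [T [sub_T card_T topT]] := exists_top_subset c le_card.
have uNT : u \notin T by apply/negP => /(subsetP sub_T); rewrite !inE eqxx.
have cu : c u < n.-1 by apply: leq_ltn_trans (min_u j0 isT) cj0.
exists u, T; split=> //; first by rewrite card_T; lia.
  move=> w wT; have uw : u != w by apply: contraNneq uNT => ->.
  by have := subsums_pair subc uw; have := min_u w isT; lia.
by move=> w v wT; rewrite setCU -setDE; apply: topT.
Qed.

Lemma untopple_full c u T : [exists j, untopple c u T j == n.-1].
Proof. by apply/existsP; exists u; rewrite /untopple eqxx. Qed.

Lemma ssm_backward_step c j0 : subsums_ge_bin2 c -> stable c -> c j0 < n.-1 ->
  exists d, [/\ subsums_ge_bin2 d, stable d, ssm_potential c < ssm_potential d
              & ssm_trans d c].
Proof.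
move=> subc stc cj0.
have [u [T [cu uNT cuT c_gt0 topT]]] := exists_untopple_set subc cj0.
have subc' := subsums_untopple subc uNT cuT topT.
have sum_T := sum_untopple uNT c_gt0.
have [/existsP[x /eqP cx]|noFull] := boolP [exists j, c j == n.-1]; last first.
  exists (untopple c u T); split; [by []|exact: untopple_stable| |exact: untopple_ssm_trans].
  by rewrite /ssm_potential (negbTE noFull) untopple_full; set_lia.
have [x' [x'T cx']] : exists x', x' \in T /\ c x' = n.-1.
  have [xT|xNT] := boolP (x \in T); first by exists x.
  have /card_gt0P[w wT] : 0 < #|T| by lia.
  have xu : x != u by apply: contraTneq cu => <-; rewrite cx ltnn.
  exists w; split=> //; have := stc w; have := topT w x wT.
  by rewrite !inE negb_or xu xNT cx => /(_ isT); lia.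
have uNTx : u \notin T :\ x' by rewrite inE negb_and uNT orbT.
have c_gt0' : {in T :\ x', forall w, 0 < c w}.
  by move=> w /setD1P[_]; apply: c_gt0.
exists (untopple c u (T :\ x')); split.
- apply: subsums_ge_bin2_le subc' => j; rewrite /untopple !inE.
  case: (j == u) => //; case: (j \in T); rewrite ?andbF //.
  by case: (j != x'); rewrite ?leq_pred.
- exact: untopple_stable.
- have full_c : [exists j, c j == n.-1] by apply/existsP; exists x; apply/eqP.
  have := sum_untopple uNTx c_gt0'; have := cardsD1 x' T.
  by rewrite /ssm_potential x'T full_c untopple_full; set_lia.
- exact: untopple_cascade_ssm_trans.
Qed.

Lemma ssm_reach_subsums c : stable c -> subsums_ge_bin2 c ->
  rtc (@ssm_trans n) (max_config n) c.
Proof.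
move=> stc subc; pose Q d := stable d /\ subsums_ge_bin2 d.
have : Q c by [].
apply: (@potential_ind _ Q _ ssm_potential (2 * (n * n.-1) + 1)) => [d [std _]|d [std subd] IH].
  exact: ssm_potential_max.
have [/forallP full_d|/forallPn [j /eqP dj]] := boolP [forall j, d j == n.-1].
  suff -> : d = max_config n by apply: rtc_refl.
  by apply: functional_extensionality => j; apply/eqP/full_d.
have dj_lt : d j < n.-1 by have := std j; lia.
have [d' [subd' std' lt_dd' d'_d]] := ssm_backward_step subd std dj_lt.
by apply: rtc_trans (IH d' (conj std' subd') lt_dd') (rtc1 d'_d).
Qed.

Lemma SR_subsumsP c : SR c <-> stable c /\ subsums_ge_bin2 c.
Proof.
split=> [srC|[stc subc]]; first by split; [case: srC|apply: SR_subsums].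
by apply/SR_max_configP; split=> //; apply: ssm_reach_subsums.
Qed.
End BackwardSSM.

(** * Dhar's burning criterion for ASM recurrence *)

Section Burning.
Variable n : nat.
Implicit Types (c d e s y : config n) (i j : 'I_n) (D : {set 'I_n}).

Definition add_config c y : config n := fun j => c j + y j.

Lemma add_config0 c y : (forall j, y j = 0) -> add_config c y = c.
Proof. by move=> y0; apply: functional_extensionality => j; rewrite /add_config y0 addn0. Qed.

Lemma asm_step_sum c d : asm_step c d -> (\sum_j d j).+1 = \sum_j c j.
Proof.
case=> i [unst_i ->]; have n_gt0 : 0 < n := leq_ltn_trans (leq0n _) (ltn_ord i).
have : \sum_j (asm_topple c i j + (j == i) * n) = \sum_j (c j + (j \in [set~ i])).
  apply: eq_bigr => j _; rewrite /asm_topple !inE.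
  by case: (eqVneq j i) => [->|_] /=; rewrite /unstable_at in unst_i; lia.
rewrite !big_split /= sum_delta sum_indicator cardsC1 card_ord; lia.
Qed.

Lemma stable_asm_step c d : stable c -> ~ asm_step c d.
Proof.
move=> stc [i [unst_i _]]; have := stc i; move: unst_i; rewrite /unstable_at.
by have : 0 < n := leq_ltn_trans (leq0n _) (ltn_ord i); lia.
Qed.

Lemma asm_stabilises c : exists d, asm_stabilises_to c d.
Proof.
have [m] := ubnP (\sum_j c j); elim: m c => // m IH c lt_m.
have [/forallP stc|/forallPn [i /negP unst_i]] := boolP [forall i, c i <= n.-1].
  by exists c; split=> //; apply: rtc_refl.
have topple_i : asm_step c (asm_topple c i) by exists i; split=> //; rewrite /unstable_at; lia.
have [|d [topple_d std]] := IH (asm_topple c i).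
  by have := asm_step_sum topple_i; lia.
by exists d; split=> //; apply: rtc_step topple_i topple_d.
Qed.

Lemma asm_diamond c d1 d2 : asm_step c d1 -> asm_step c d2 ->
  d1 = d2 \/ exists2 e, asm_step d1 e & asm_step d2 e.
Proof.
case=> i [unst_i ->] [j [unst_j ->]]; rewrite /unstable_at in unst_i unst_j.
have [<-|ij] := eqVneq i j; [by left|right].
exists (asm_topple (asm_topple c i) j).
  by exists j; split=> //; rewrite /unstable_at /asm_topple eq_sym (negbTE ij); lia.
exists i; split; first by rewrite /unstable_at /asm_topple (negbTE ij); lia.
apply: functional_extensionality => k; rewrite /asm_topple.
by case: (eqVneq k i) => [->|ki]; case: (eqVneq k j) => [kj|kj] //; rewrite ?kj ?(negbTE ij); lia.
Qed.

Lemma asm_confluent c d s : rtc (@asm_step n) c d -> rtc (@asm_step n) c s ->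
  stable s -> rtc (@asm_step n) d s.
Proof.
have confluent1 c' d' : asm_step c' d' -> rtc (@asm_step n) c' s -> stable s ->
    rtc (@asm_step n) d' s.
  move=> step_d' c's; elim: c's d' step_d' => [x|x y z step_y yz IH] d' step_d' sts.
    by case: (stable_asm_step sts step_d').
  case: (asm_diamond step_y step_d') => [<-|[e step_ye step_d'e]] //.
  exact: rtc_step step_d'e (IH _ step_ye sts).
elim=> // x y z step_y _ IH xs sts.
exact: IH (confluent1 _ _ step_y xs sts) sts.
Qed.

Lemma asm_step_add_config c d y :
  asm_step c d -> asm_step (add_config c y) (add_config d y).
Proof.
case=> i [unst_i ->]; exists i; split; first by move: unst_i; rewrite /unstable_at /add_config; lia.
apply: functional_extensionality => j; rewrite /add_config /asm_topple.
by case: eqP => [->|//]; move: unst_i; rewrite /unstable_at; lia.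
Qed.

Lemma asm_rtc_add_config c d y : rtc (@asm_step n) c d ->
  rtc (@asm_step n) (add_config c y) (add_config d y).
Proof. by elim=> [x|x x' z /(asm_step_add_config y) step _]; [apply: rtc_refl|apply: rtc_step]. Qed.

Lemma stable_asm_rtc c d : stable c -> rtc (@asm_step n) c d -> d = c.
Proof. by move=> stc cd; case: cd stc => // x y z step_xy _ /stable_asm_step/(_ step_xy). Qed.

(* Confluence lets us stabilise [e + y] by adding the grains of [y] one at a
   time, stabilising after each of them. *)
Lemma asm_trans_add_config e y s : stable e -> stable s ->
  rtc (@asm_step n) (add_config e y) s -> rtc (@asm_trans n) e s.
Proof.
have [m] := ubnP (\sum_j y j); elim: m y e => // m IH y e lt_m ste sts e_s.
have [/existsP[v yv]|/existsPn y0] := boolP [exists v, 0 < y v]; last first.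
  rewrite add_config0 in e_s; last by move=> j; have := y0 j; lia.
  by rewrite (stable_asm_rtc ste e_s); apply: rtc_refl.
pose y' : config n := fun j => if j == v then (y j).-1 else y j.
have [e' [e_e' ste']] := asm_stabilises (add_grain e v).
have e'_s : rtc (@asm_step n) (add_config e' y') s.
  apply: asm_confluent (asm_rtc_add_config y' e_e') _ sts.
  suff -> : add_config (add_grain e v) y' = add_config e y by [].
  apply: functional_extensionality => j; rewrite /add_config /add_grain /y'.
  by case: eqP => [->|]; lia.
apply: rtc_step (IH y' e' _ ste' sts e'_s); first by split=> //; exists v.
suff : \sum_j y' j + 1 = \sum_j y j by lia.
rewrite -(sum_delta v (fun=> 1)) -big_split /=; apply: eq_bigr => j _.
by rewrite /y'; case: eqP => [->|]; lia.
Qed.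

Definition burnable c :=
  forall A : {set 'I_n}, A != set0 -> exists2 j, j \in A & #|A|.-1 <= c j.

(* Dhar's burning algorithm: [c + 1] after each vertex of [D] has toppled once. *)
Definition burnt c D : config n :=
  fun j => if j \in D then c j + #|D| - n else c j + 1 + #|D|.

Lemma asm_burn c : burnable c -> rtc (@asm_step n) (add_config c (fun=> 1)) c.
Proof.
move=> burn_c.
have burn D : (forall j, j \in D -> n <= c j + #|D|) -> rtc (@asm_step n) (burnt c D) c.
  have [m] := ubnP #|~: D|; elim: m D => // m IH D lt_m burnt_D.
  have [D0|DN0] := eqVneq (~: D) set0.
    suff -> : burnt c D = c by apply: rtc_refl.
    have DT : D = setT by rewrite -[D]setCK D0 setC0.
    by apply: functional_extensionality => j; rewrite /burnt DT inE cardsT card_ord addnK.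
  have [j jND cj] := burn_c _ DN0; rewrite inE in jND.
  have cardD := cardsC D; rewrite card_ord in cardD.
  have card_jD : #|j |: D| = #|D|.+1 by rewrite cardsU1 jND.
  apply: rtc_step (IH (j |: D) _ _).
  - exists j; split; first by rewrite /unstable_at /burnt (negbTE jND); lia.
    apply: functional_extensionality => l; rewrite /asm_topple /burnt in_setU1 card_jD.
    case: (eqVneq l j) => [->|lj] /=; first by rewrite (negbTE jND); lia.
    by case: (boolP (l \in D)) => [/burnt_D|] /=; lia.
  - by have := cardsC (j |: D); rewrite card_ord card_jD; lia.
  by move=> l; rewrite in_setU1 card_jD => /orP[/eqP ->|/burnt_D]; lia.
suff -> : add_config c (fun=> 1) = burnt c set0 by apply: burn => j; rewrite inE.
by apply: functional_extensionality => j; rewrite /add_config /burnt inE cards0 addn0.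
Qed.

Lemma burnable_DR c : stable c -> burnable c -> DR c.
Proof.
move=> stc burn_c; apply/DR_max_configP; split=> //.
apply: (asm_trans_add_config (y := c)) => //.
have -> : add_config (max_config n) c = add_config c (fun=> n.-1).
  by apply: functional_extensionality => j; rewrite /add_config addnC.
elim: n.-1 => [|m IH]; first by rewrite add_config0 //; apply: rtc_refl.
have -> : add_config c (fun=> m.+1) = add_config (add_config c (fun=> 1)) (fun=> m).
  by apply: functional_extensionality => j; rewrite /add_config; lia.
exact: rtc_trans (asm_rtc_add_config _ (asm_burn burn_c)) IH.
Qed.
End Burning.

(** * Splitting SR states into DR states *)

Section MoveGrain.
Variable n : nat.
Implicit Types (c : config n) (p q j : 'I_n) (A : {set 'I_n}).

Definition move_grain c q p : config n :=
  fun j => if j == p then (c j).+1 else if j == q then (c j).-1 else c j.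

Lemma move_grainE c p q j : p != q -> 0 < c q ->
  move_grain c q p j + (j == q) = c j + (j == p).
Proof.
move=> pq cq; rewrite /move_grain.
case: (eqVneq j p) => [->|jp]; first by rewrite (negbTE pq) addn0 addn1.
by case: (eqVneq j q) => [->|] /=; lia.
Qed.

Lemma move_grain_stable c p q : stable c -> c p < n.-1 -> stable (move_grain c q p).
Proof.
move=> stc cp j; rewrite /move_grain.
case: (eqVneq j p) => [->|_] //; case: (j == q) => //.
exact: leq_trans (leq_pred _) (stc j).
Qed.

Lemma move_grain_level c p q k : p != q -> 0 < c q ->
  has_level c k -> has_level (move_grain c q p) k.
Proof.
move=> pq cq; rewrite /has_level => <-.
have : \sum_j (move_grain c q p j + (j == q)) = \sum_j (c j + (j == p)).
  by apply: eq_bigr => j _; apply: move_grainE.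
by rewrite !big_split /= !sum_pred1 => /addIn.
Qed.

Lemma subsums_move_grain c p q : p != q -> c p = c q -> 0 < c q ->
  subsums_ge_bin2 c -> subsums_ge_bin2 (move_grain c q p).
Proof.
move=> pq cpq cq subc A.
have : \sum_(j in A) (move_grain c q p j + (j == q)) = \sum_(j in A) (c j + (j == p)).
  by apply: eq_bigr => j _; apply: move_grainE.
rewrite !big_split /= !sum_pred1.
have [qA|qNA] := boolP (q \in A); last first.
  move=> _; apply: leq_trans (subc A) _; apply: leq_sum => j jA; rewrite /move_grain.
  by case: (eqVneq j p) => // _; case: (eqVneq j q) => [eq_jq|//]; rewrite -eq_jq jA in qNA.
have [pA /addIn -> //|pNA] := boolP (p \in A).
have := subc (p |: A); rewrite (big_setU1 _ pNA) cardsU1 pNA /=.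
have := subc (A :\ q).
have : \sum_(j in A) c j = c q + \sum_(j in A :\ q) c j by rewrite (big_setD1 q qA).
have cardA : #|A| = #|A :\ q|.+1 by rewrite (cardsD1 q A) qA.
rewrite cardA !bin2S cpq; set_lia.
Qed.

Definition sum_sq c := \sum_j c j ^ 2.

Lemma sum_sq_move_grain c p q : p != q -> c p = c q -> 0 < c q ->
  sum_sq c < sum_sq (move_grain c q p).
Proof.
move=> pq cpq cq.
have : \sum_j (move_grain c q p j ^ 2 + (j == q) * (2 * c q).-1) =
       \sum_j (c j ^ 2 + (j == p) * (2 * c p).+1).
  apply: eq_bigr => j _; rewrite /move_grain -!mulnn.
  case: (eqVneq j p) => [->|jp]; first by rewrite (negbTE pq); nia.
  by case: (eqVneq j q) => [->|jq] /=; [case: (c q) cq => //= t _; nia|lia].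
rewrite !big_split /= !sum_delta /sum_sq cpq; set_lia.
Qed.

Lemma move_grain_mid c p q j : p != q -> c p = c q -> 0 < c q ->
  move_grain c q p j + move_grain c p q j = c j * 2.
Proof.
move=> pq cpq cq; rewrite /move_grain.
case: (eqVneq j p) => [->|jp]; first by rewrite (negbTE pq); lia.
by case: (eqVneq j q) => [->|jq] /=; lia.
Qed.

Lemma subsums_distinct_burnable c : subsums_ge_bin2 c ->
  (forall p q, p != q -> c p = c q -> c p = 0 \/ n.-1 <= c p) -> burnable c.
Proof.
move=> subc distinct A A0.
have [/existsP[j /andP[jA cj]]|none] := boolP [exists j in A, #|A|.-1 <= c j].
  by exists j.
have lt_c j : j \in A -> c j < #|A|.-1.
  by move=> jA; move/existsPn: none => /(_ j); rewrite jA /= ltnNge.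
have le_An : #|A| <= n by have := max_card (mem A); rewrite card_ord.
have inj_c : {in enum A &, injective c}.
  move=> i j; rewrite !mem_enum => iA jA cij; apply/eqP; apply: contraT => ij.
  case: (distinct _ _ ij cij) => [ci0|].
    by have := subsums_pair subc ij; rewrite -cij ci0.
  by have := lt_c i iA; lia.
have : uniq [seq c j | j <- enum A] by rewrite map_inj_in_uniq ?enum_uniq.
move/uniq_leq_size => /(_ (iota 0 #|A|.-1)).
rewrite size_map size_iota -cardE => le_size.
have : #|A| <= #|A|.-1.
  apply: le_size => x /mapP[j]; rewrite mem_enum => jA ->.
  by rewrite mem_iota add0n lt_c.
by have := A0; rewrite -card_gt0; lia.
Qed.

Lemma sum_sq_max c : stable c -> sum_sq c <= n * n.-1 ^ 2.
Proof.
move=> stc; rewrite /sum_sq -[n in n * _]card_ord -sum_nat_const.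
by apply: leq_sum => j _; rewrite leq_exp2r.
Qed.
End MoveGrain.

Section ConvexHull.
Variables (R : realType) (n : nat).
Implicit Types (S : config n -> Prop) (c : config n) (x : 'I_n -> R).
Local Open Scope ring_scope.

Lemma in_conv_hull_mem S c : S c -> in_conv_hull S (fun i => (c i)%:R : R).
Proof.
move=> Sc; exists 1%N, (fun=> c), (fun=> 1); split=> //; first by rewrite big_ord1.
by move=> i; rewrite big_ord1 mul1r.
Qed.

Lemma in_conv_hull_midpoint S x1 x2 x : in_conv_hull S x1 -> in_conv_hull S x2 ->
  (forall i, x i = (x1 i + x2 i) / 2) -> in_conv_hull S x.
Proof.
move=> [m1 [p1 [w1 [Sp1 w1_ge0 w1_1 x1E]]]] [m2 [p2 [w2 [Sp2 w2_ge0 w2_1 x2E]]]] xE.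
pose p j := match split j with inl a => p1 a | inr b => p2 b end.
pose w j := match split j with inl a => w1 a / 2 | inr b => w2 b / 2 end.
have wl a : w (lshift m2 a) = w1 a / 2 by rewrite /w (unsplitK (inl a)).
have wr b : w (rshift m1 b) = w2 b / 2 by rewrite /w (unsplitK (inr b)).
exists (m1 + m2)%N, p, w; split.
- by move=> j; rewrite /p; case: (split j).
- by move=> j; rewrite /w; case: (split j) => a; apply: divr_ge0.
- rewrite big_split_ord /=; under eq_bigr do rewrite wl.
  by under [X in _ + X]eq_bigr do rewrite wr; rewrite -!mulr_suml w1_1 w2_1; lra.
move=> i; rewrite xE x1E x2E big_split_ord /= mulrDl !mulr_suml.
congr (_ + _); apply: eq_bigr => a _.
  by rewrite wl /p (unsplitK (inl a)) mulrAC.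
by rewrite wr /p (unsplitK (inr a)) mulrAC.
Qed.

Lemma in_conv_hull_sum_ge S (P : pred 'I_n) (b : R) x :
  (forall c, S c -> b <= \sum_(i | P i) (c i)%:R) -> in_conv_hull S x ->
  b <= \sum_(i | P i) x i.
Proof.
move=> Sb [m [p [w [Sp w_ge0 w1 xE]]]].
under eq_bigr do rewrite xE; rewrite exchange_big /=.
have -> : b = \sum_j w j * b by rewrite -mulr_suml w1 mul1r.
by apply: ler_sum => j _; rewrite -mulr_sumr ler_wpM2l ?Sb.
Qed.

Lemma in_conv_hull_sum_le S (P : pred 'I_n) (b : R) x :
  (forall c, S c -> \sum_(i | P i) (c i)%:R <= b) -> in_conv_hull S x ->
  \sum_(i | P i) x i <= b.
Proof.
move=> Sb [m [p [w [Sp w_ge0 w1 xE]]]].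
under eq_bigr do rewrite xE; rewrite exchange_big /=.
have -> : b = \sum_j w j * b by rewrite -mulr_suml w1 mul1r.
by apply: ler_sum => j _; rewrite -mulr_sumr ler_wpM2l ?Sb.
Qed.

Lemma in_conv_hull_DR_subsums k c :
  in_conv_hull (fun d => DR d /\ has_level d k) (fun i => (c i)%:R : R) ->
  [/\ stable c, subsums_ge_bin2 c & has_level c k].
Proof.
move=> hull; split.
- move=> i; have := in_conv_hull_sum_le (P := mem [set i]) (b := n.-1%:R) _ hull.
  rewrite big_set1 ler_nat; apply=> d [/DR_SR/SR_subsumsP[std _] _].
  by rewrite big_set1 ler_nat.
- move=> A; rewrite -(ler_nat R) natr_sum; apply: in_conv_hull_sum_ge hull => d.
  by case=> /DR_SR/SR_subsumsP[_ subd] _; rewrite -natr_sum ler_nat.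
apply/eqP; rewrite /has_level -(eqr_nat R) natr_sum eq_le.
rewrite (in_conv_hull_sum_le _ hull) ?(in_conv_hull_sum_ge _ hull) // => d [_ lvl];
  by rewrite -natr_sum lvl.
Qed.

Lemma subsums_in_conv_hull_DR k c : stable c -> subsums_ge_bin2 c -> has_level c k ->
  in_conv_hull (fun d => DR d /\ has_level d k) (fun i => (c i)%:R : R).
Proof.
pose Q (d : config n) := [/\ stable d, subsums_ge_bin2 d & has_level d k].
pose P (d : config n) := in_conv_hull (fun d => DR d /\ has_level d k) (fun i => (d i)%:R : R).
move=> stc subc lvl; suff : P c by [].
apply: (@potential_ind _ Q P (@sum_sq n) (n * n.-1 ^ 2)%N) => [d [std _ _]|d [std subd lvld] IH|//].
  exact: sum_sq_max.
have [/existsP[p /existsP[q /and4P[pq /eqP dpq dp_gt0 dp_lt]]]|distinct] :=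
  boolP [exists p, exists q, [&& p != q, d p == d q, 0 < d p & d p < n.-1]]%N.
  have move_P a b : a != b -> d a = d p -> d b = d p -> P (move_grain d b a).
    move=> ab dap dbp; have db_gt0 : (0 < d b)%N by rewrite dbp.
    have dab : d a = d b by rewrite dap dbp.
    apply: IH; last exact: sum_sq_move_grain.
    split; [by apply: move_grain_stable; rewrite ?dap|exact: subsums_move_grain|
            exact: move_grain_level].
  have qp : q != p by rewrite eq_sym.
  have dq_gt0 : (0 < d q)%N by rewrite -dpq.
  apply: (in_conv_hull_midpoint (move_P p q pq erefl (esym dpq))
                                (move_P q p qp (esym dpq) erefl)).
  by move=> i; rewrite -natrD move_grain_mid // natrM mulfK // pnatr_eq0.
apply: in_conv_hull_mem; split=> //; apply: burnable_DR std (subsums_distinct_burnable subd _).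
move=> p q pq dpq; move/existsPn: distinct => /(_ p) /existsPn /(_ q).
rewrite pq dpq eqxx /=; case: (d q) => [|t] /=; [by left|right; lia].
Qed.
End ConvexHull.

Local Open Scope ring_scope.

Theorem mainTheorem11 (R : realType) (n k : nat) : (1 <= n)%N ->
  forall z : 'I_n -> int,
    (exists c : config n, [/\ SR c, has_level c k & forall i, z i = Posz (c i)])
    <->
    in_conv_hull (fun c : config n => DR c /\ has_level c k)
                 (fun i => ((z i)%:~R : R)).
Proof.
move=> _ z; split=> [[c [/SR_subsumsP[stc subc] lvl zc]]|hull].
  have -> : (fun i => (z i)%:~R) = (fun i => (c i)%:R :> R).
    by apply: functional_extensionality => i; rewrite zc.
  exact: subsums_in_conv_hull_DR.
have z_ge0 i : (0 <= z i)%R.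
  have := in_conv_hull_sum_ge (P := mem [set i]) (b := 0) _ hull.
  by rewrite big_set1 ler0z; apply=> d _; rewrite big_set1.
have zE : (fun i => (z i)%:~R) = (fun i => (`|z i|%N)%:R :> R).
  by apply: functional_extensionality => i; rewrite natr_absz ger0_norm.
rewrite zE in hull; have [stc subc lvl] := in_conv_hull_DR_subsums hull.
exists (fun i => `|z i|%N); split=> // [|i]; first exact/SR_subsumsP.
by rewrite gez0_abs.
Qed.
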